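(* Let $\mathcal{D}=\{(\mathbf{p}_n,\mathbf{q}_n)\}_{n=1}^N$ be data with $\mathbf{p}_n\in\mathbb{R}_{++}^K$, $\mathbf{q}_n\in\mathbb{R}_+^K$, whose associated graph $G$ satisfies the Cycle Edge Weight Equality Condition (CEWEC), and let $\mathcal{D}'$ consist of $\mathcal{D}$ together with at least one additional observation $(\mathbf{p},\mathbf{q})\in\mathbb{R}_{++}^K\times\mathbb{R}_+^K$, with associated graph $G'$. If $G'$ also satisfies the CEWEC, then for every price vector $\mathbf{p}\in\mathbb{R}_{++}^K$ and every vertex $\upsilon$ of $G$, $$M^-_{G'}(\mathbf{p},\upsilon)\ge M^-_G(\mathbf{p},\upsilon)\quad\text{and}\quad M^+_{G'}(\mathbf{p},\upsilon)\le M^+_G(\mathbf{p},\upsilon).$$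
   Context: For a dataset $\{(\mathbf{p}_n,\mathbf{q}_n)\}$, its associated graph $H$ is the weighted directed graph with one vertex $\upsilon_n$ per observation, an edge from $\upsilon_m$ to $\upsilon_n$ for each $m\ne n$, with weight $w(\upsilon_m,\upsilon_n)=\frac{\mathbf{p}_m\cdot\mathbf{q}_n}{\mathbf{p}_m\cdot\mathbf{q}_m}$. $H$ satisfies the CEWEC if for every cycle in $H$ all of whose edge weights are $\le 1$, all of its edge weights equal $1$. A walk $\upsilon_{a_0},\dots,\upsilon_{a_k}$ ($k\ge0$) in $H$ is an RP-walk if every edge weight along it is $\le 1$; write $uRv$ if there is an RP-walk from $u$ to $v$ in $H$. Set $\operatorname{VRP}_H(\upsilon)=\{l:\upsilon_l R\,\upsilon\}$ and $\operatorname{VRW}_H(\upsilon)=\{l:\upsilon R\,\upsilon_l\}$, and define $M^-_H(\mathbf{p},\upsilon)=\inf_{\mathbf{q}\in\mathbb{R}_+^K}\{\mathbf{p}\cdot\mathbf{q}:\mathbf{p}_l\cdot\mathbf{q}\ge\mathbf{p}_l\cdot\mathbf{q}_l \text{ for all } l\in\operatorname{VRW}_H(\upsilon)\}$ and $M^+_H(\mathbf{p},\upsilon)=\min\{\mathbf{p}\cdot\mathbf{q}_l: l\in\operatorname{VRP}_H(\upsilon)\}$. *)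

From HB Require Import structures.
From mathcomp Require Import all_boot all_order all_algebra.
From mathcomp Require Import boolp classical_sets reals.
Set Implicit Arguments. Unset Strict Implicit. Unset Printing Implicit Defensive.
Import Order.TTheory GRing.Theory Num.Theory.
Local Open Scope ring_scope.
Local Open Scope classical_set_scope.

Section RPGraph.
Variables (R : realType) (K : nat) (I : finType).
Variables (P Q : I -> 'I_K -> R).

Definition dot (x y : 'I_K -> R) : R := \sum_(k < K) x k * y k.

Definition weight (m n : I) : R := dot (P m) (Q n) / dot (P m) (Q m).

Definition rp_edge : rel I := fun m n => (m != n) && (weight m n <= 1).

Definition CEWEC : Prop :=
  forall s : seq I, uniq s -> (2 <= size s)%N ->
    cycle rp_edge s -> cycle (fun m n => weight m n == 1) s.

Definition RPrel (u v : I) : Prop :=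
  exists s : seq I, path rp_edge u s /\ last u s = v.

Definition VRP (v : I) : set I := [set l | RPrel l v].
Definition VRW (v : I) : set I := [set l | RPrel v l].

Definition Mminus (p : 'I_K -> R) (v : I) : R :=
  inf [set dot p q | q in [set q : 'I_K -> R |
         (forall k, 0 <= q k) /\
         (forall l, VRW v l -> dot (P l) (Q l) <= dot (P l) q)]].

(* minimum over the finite nonempty set VRP v (inf of a finite set) *)
Definition Mplus (p : 'I_K -> R) (v : I) : R :=
  inf [set dot p (Q l) | l in VRP v].

End RPGraph.

From HB Require Import structures.
From mathcomp Require Import all_boot all_order all_algebra.
From mathcomp Require Import boolp classical_sets reals.
Import Order.TTheory GRing.Theory Num.Theory.
Local Open Scope ring_scope.
Local Open Scope classical_set_scope.

(* The graph G sits inside G' as an induced weighted subgraph (observation n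
   of D is observation n of D'), so every RP-walk of G is an RP-walk of G' and
   the sets VRW and VRP can only grow when passing from G to G'.  Hence M^- is
   an infimum over a feasible set cut out by more constraints in G', and M^+
   an infimum over more candidates; both sets are bounded below by 0 since
   prices and quantities are nonnegative. *)

Lemma le_inf_subset (R : realType) (A B : set R) :
  A `<=` B -> A !=set0 -> has_lbound B -> inf B <= inf A.
Proof.
move=> AB neA lbB; apply: lb_le_inf => // x Ax.
exact: ge_inf lbB _ (AB _ Ax).
Qed.

Section Dot.
Variables (R : realType) (K : nat).
Implicit Types x y z : 'I_K -> R.

Lemma dot_ge0 x y : (forall k, 0 <= x k) -> (forall k, 0 <= y k) -> 0 <= dot x y.
Proof. by move=> x0 y0; apply: sumr_ge0 => k _; apply: mulr_ge0. Qed.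

Lemma ler_wdot2l x y z :
  (forall k, 0 <= x k) -> (forall k, y k <= z k) -> dot x y <= dot x z.
Proof. by move=> x0 yz; apply: ler_sum => k _; apply: ler_wpM2l. Qed.

End Dot.

Section NonnegativeData.
Variables (R : realType) (K : nat) (I : finType) (P Q : I -> 'I_K -> R).
Hypotheses (P_ge0 : forall n k, 0 <= P n k) (Q_ge0 : forall n k, 0 <= Q n k).

(* The total bundle sum_n q_n satisfies every constraint in the definition of
   M^-, so its feasible set is never empty. *)
Lemma dot_le_dot_sumQ l : dot (P l) (Q l) <= dot (P l) (fun k => \sum_n Q n k).
Proof.
apply: ler_wdot2l => // k.
by rewrite (bigD1 l) //= lerDl sumr_ge0.
Qed.

End NonnegativeData.

Section InducedSubgraph.
Variables (R : realType) (K : nat) (I J : finType).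
Variables (P Q : I -> 'I_K -> R) (P' Q' : J -> 'I_K -> R) (f : I -> J).
Hypothesis f_inj : injective f.
Hypotheses (P'f : forall m, P' (f m) = P m) (Q'f : forall m, Q' (f m) = Q m).

Lemma weight_induced m n : weight P' Q' (f m) (f n) = weight P Q m n.
Proof. by rewrite /weight !P'f !Q'f. Qed.

Lemma rp_edge_induced m n : rp_edge P' Q' (f m) (f n) = rp_edge P Q m n.
Proof. by rewrite /rp_edge weight_induced (inj_eq f_inj). Qed.

Lemma RPrel_induced u v : RPrel P Q u v -> RPrel P' Q' (f u) (f v).
Proof.
move=> [s [walk_s <-]]; exists (map f s); split; last by rewrite last_map.
by rewrite path_map (eq_path rp_edge_induced).
Qed.

Variable p : 'I_K -> R.
Hypothesis p_ge0 : forall k, 0 <= p k.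
Hypotheses (P'_ge0 : forall n k, 0 <= P' n k) (Q'_ge0 : forall n k, 0 <= Q' n k).

Lemma Mminus_induced v : Mminus P Q p v <= Mminus P' Q' p (f v).
Proof.
apply: le_inf_subset.
- move=> _ [q [q_ge0 feas_q] <-]; exists q => //; split => // l vRl.
  by have := feas_q (f l); rewrite P'f Q'f; apply; apply: RPrel_induced.
- pose qsum k := \sum_n Q' n k.
  exists (dot p qsum), qsum => //; split => [k|l _]; first exact: sumr_ge0.
  exact: dot_le_dot_sumQ.
- by exists 0 => _ [q [q_ge0 _] <-]; apply: dot_ge0.
Qed.

Lemma Mplus_induced v : Mplus P' Q' p (f v) <= Mplus P Q p v.
Proof.
apply: le_inf_subset.
- move=> _ [l lRv <-]; exists (f l); last by rewrite Q'f.
  exact: RPrel_induced.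
- by exists (dot p (Q v)), v => //; exists [::].
- by exists 0 => _ [l _ <-]; apply: dot_ge0.
Qed.

End InducedSubgraph.

Theorem fact1 (R : realType) (K N N' : nat)
  (P Q : 'I_N -> 'I_K -> R) (P' Q' : 'I_N' -> 'I_K -> R) :
  (forall n k, 0 < P n k) -> (forall n k, 0 <= Q n k) ->
  (forall n k, 0 < P' n k) -> (forall n k, 0 <= Q' n k) ->
  (N < N')%N ->
  (forall (i : 'I_N) (j : 'I_N'), val i = val j -> P' j = P i /\ Q' j = Q i) ->
  CEWEC P Q -> CEWEC P' Q' ->
  forall p : 'I_K -> R, (forall k, 0 < p k) ->
  forall (i : 'I_N) (j : 'I_N'), val i = val j ->
    Mminus P Q p i <= Mminus P' Q' p j /\ Mplus P' Q' p j <= Mplus P Q p i.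
Proof.
move=> _ _ P'_gt0 Q'_ge0 ltNN' same_obs _ _ p p_gt0 i j ij.
pose f := widen_ord (ltnW ltNN').
have f_inj : injective f by move=> a b /(congr1 val) eq_ab; apply: val_inj.
have P'f m : P' (f m) = P m by case: (same_obs m (f m) erefl).
have Q'f m : Q' (f m) = Q m by case: (same_obs m (f m) erefl).
have -> : j = f i by apply: val_inj; rewrite -ij.
have p_ge0 k : 0 <= p k by apply: ltW.
have P'_ge0 n k : 0 <= P' n k by apply: ltW.
split; first exact: Mminus_induced.
exact: Mplus_induced.
Qed.
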